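(* Let $\mathbf{A}$ be a finite algebra with $|A|>1$. Then for every integer $n>0$, \[ \lceil \log_{|A|}(n) \rceil\leq d_{\mathbf{A}}(n) \leq |A|^n \qquad\text{and}\qquad \lfloor \log_{|A|}(n) \rfloor\leq h_{\mathbf{A}}(n) \leq |A|^n . \] Hence $d_{\mathbf{A}}(n), h_{\mathbf{A}}(n)\in \Omega(\log(n))\cap 2^{O(n)}$. Moreover: (1) $d_{\mathbf{A}}(n) \in O(\log(n))$ if and only if $h_{\mathbf{A}}(n) \in 2^{\Omega(n)}$; (2) $d_{\mathbf{A}}(n) \in O(n)$ if and only if $h_{\mathbf{A}}(n) \in \Omega(n)$, and $d_{\mathbf{A}}(n) \in \Omega(n)$ if and only if $h_{\mathbf{A}}(n) \in O(n)$; (3) $d_{\mathbf{A}}(n) \in 2^{\Omega(n)}$ if and only if $h_{\mathbf{A}}(n) \in O(\log(n))$.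
   Context: For an algebra $\mathbf{A}$ and $n\in\omega=\{0,1,2,\dots\}$, $d_{\mathbf{A}}(n)$ denotes the least size of a generating set of the direct power $\mathbf{A}^n$ (the value is $\omega$ if $\mathbf{A}^n$ is not finitely generated), and $h_{\mathbf{A}}(g)$ denotes the largest $n$ such that $\mathbf{A}^n$ is generated by $g$ elements. Thus $d_{\mathbf{A}}(n)\le g$ iff $n\le h_{\mathbf{A}}(g)$. Big-O notation: $f\in O(g)$ means $|f(x)|\le M|g(x)|$ for some positive constants $M,N$ and all $x>N$; $f\in\Omega(g)$ means $|f(x)|\ge M|g(x)|$ for all $x>N$; $f\in 2^{O(n)}$ (resp. $2^{\Omega(n)}$) means $f(n)=2^{g(n)}$ with $g\in O(n)$ (resp. $g\in\Omega(n)$). *)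

From Stdlib Require Import Reals ClassicalEpsilon.
From mathcomp Require Import all_boot.

Set Implicit Arguments.
Unset Strict Implicit.
Unset Printing Implicit Defensive.

Section Alg.
Variables (A : finType) (F : Type) (ar : F -> nat)
          (ops : forall f : F, ('I_(ar f) -> A) -> A).

(* Subuniverse of the direct power A^n generated by S (operations act
   coordinatewise). *)
Inductive generated (n : nat) (S : {ffun 'I_n -> A} -> Prop)
  : {ffun 'I_n -> A} -> Prop :=
| gen_base x : S x -> generated S x
| gen_op (f : F) (xs : 'I_(ar f) -> {ffun 'I_n -> A}) :
    (forall i, generated S (xs i)) ->
    generated S [ffun j => @ops f (fun i => xs i j)].

Definition generates (n : nat) (S : {ffun 'I_n -> A} -> Prop) : Prop :=
  forall x, generated S x.

(* A^n is generated by (at most) g elements. *)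
Definition power_gen_by (n g : nat) : Prop :=
  exists gens : 'I_g -> {ffun 'I_n -> A},
    generates (fun x => exists i, gens i = x).

Definition d_A (n : nat) : nat :=
  epsilon (inhabits 0%N)
    (fun g => power_gen_by n g /\ forall g', power_gen_by n g' -> (g <= g')%N).

Definition h_A (g : nat) : nat :=
  epsilon (inhabits 0%N)
    (fun n => power_gen_by n g /\ forall n', power_gen_by n' g -> (n' <= n)%N).
End Alg.

Local Open Scope R_scope.

Definition natR (f : nat -> nat) : nat -> R := fun n => INR (f n).
Definition logR : nat -> R := fun n => ln (INR n).
Definition idR : nat -> R := fun n => INR n.

Definition bigO (f g : nat -> R) : Prop :=
  exists M N : R, 0 < M /\ 0 < N /\
    forall x : nat, N < INR x -> Rabs (f x) <= M * Rabs (g x).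

Definition bigOmega (f g : nat -> R) : Prop :=
  exists M N : R, 0 < M /\ 0 < N /\
    forall x : nat, N < INR x -> Rabs (f x) >= M * Rabs (g x).

Definition exp_bigO (f : nat -> R) : Prop :=
  exists g : nat -> R, bigO g idR /\
    exists N : R, 0 < N /\ forall x : nat, N < INR x -> f x = Rpower 2 (g x).

Definition exp_bigOmega (f : nat -> R) : Prop :=
  exists g : nat -> R, bigOmega g idR /\
    exists N : R, 0 < N /\ forall x : nat, N < INR x -> f x = Rpower 2 (g x).

(* The number of generators needed for A^n and the exponent reachable with g
   generators are adjoint: A^n is g-generated iff d(n) <= g, and iff n <= h(g)
   (for g > 0), because g-generation is monotone in g and antitone in n
   (coordinate projections are onto).  Counting gives the bounds: a generating
   g-tuple of A^n has n pairwise distinct columns in A^g, since generated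
   elements agree on any two coordinates where all generators agree, so
   n <= |A|^g; and the |A|^n elements of A^n generate it.  Every asymptotic
   equivalence then transfers an eventual bound on d through the adjunction
   into the inverse bound on h, or back, using only these two facts. *)

From Stdlib Require Import Reals Lra ClassicalEpsilon FunctionalExtensionality.
From mathcomp Require Import all_boot.

Set Implicit Arguments.
Unset Strict Implicit.
Unset Printing Implicit Defensive.

Definition decide (P : Prop) : bool := if excluded_middle_informative P then true else false.

Lemma decideP (P : Prop) : reflect P (decide P).
Proof. by rewrite /decide; case: excluded_middle_informative; constructor. Qed.

Lemma exists_least (Q : nat -> Prop) :
  (exists n, Q n) -> exists m, Q m /\ forall k, Q k -> (m <= k)%N.
Proof.
move=> exQ; have exq : exists n, decide (Q n) by case: exQ => n /decideP; exists n.
by case: (ex_minnP exq) => m /decideP Qm minm; exists m; split=> // k /decideP /minm.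
Qed.

Lemma exists_greatest (Q : nat -> Prop) (B : nat) :
  (exists n, Q n) -> (forall k, Q k -> (k <= B)%N) ->
  exists m, Q m /\ forall k, Q k -> (k <= m)%N.
Proof.
move=> exQ QB; have exq : exists n, decide (Q n) by case: exQ => n /decideP; exists n.
have qB k : decide (Q k) -> (k <= B)%N by move/decideP/QB.
by case: (ex_maxnP exq qB) => m /decideP Qm maxm; exists m; split=> // k /decideP /maxm.
Qed.

Section PowerGeneration.
Variables (A : finType) (F : Type) (ar : F -> nat)
          (ops : forall f : F, ('I_(ar f) -> A) -> A).

Local Notation generated := (generated ops).
Local Notation power_gen_by := (power_gen_by ops).

Lemma generated_mono n (S S' : {ffun 'I_n -> A} -> Prop) x :
  (forall y, S y -> S' y) -> generated S x -> generated S' x.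
Proof.
move=> SS'; elim=> [y /SS' S'y | f xs _ IH]; first exact: gen_base.
exact: gen_op.
Qed.

Lemma generated_eq_coord n (S : {ffun 'I_n -> A} -> Prop) (j1 j2 : 'I_n) x :
  (forall y, S y -> y j1 = y j2) -> generated S x -> x j1 = x j2.
Proof.
move=> Sj; elim=> [y /Sj // | f xs _ IH].
by rewrite !ffunE; congr (ops _); apply: functional_extensionality.
Qed.

Lemma power_gen_by_card n g :
  (1 < #|A|)%N -> power_gen_by n g -> (n <= #|A| ^ g)%N.
Proof.
case/card_gt1P=> [b0 [b1 [_ _ b01]]] [gens gensP].
pose column (j : 'I_n) : {ffun 'I_g -> A} := [ffun i => gens i j].
suff inj_column : injective column.
  by have := leq_card column inj_column; rewrite card_ord card_ffun card_ord.
move=> j1 j2 e; apply/eqP; apply: contraNT b01 => j12.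
pose x : {ffun 'I_n -> A} := [ffun j => if j == j1 then b0 else b1].
have gens_eq y : (exists i, gens i = y) -> y j1 = y j2.
  by case=> i <-; move: (congr1 (fun r : {ffun _ -> A} => r i) e); rewrite !ffunE.
have := generated_eq_coord gens_eq (gensP x).
by rewrite !ffunE eqxx eq_sym (negbTE j12) => ->.
Qed.

Variable a0 : A.

Lemma power_gen_by_all n g : (#|A| ^ n <= g)%N -> power_gen_by n g.
Proof.
move=> le_g; pose x0 : {ffun 'I_n -> A} := [ffun _ => a0].
exists (fun i => nth x0 (enum {ffun 'I_n -> A}) i) => x; apply: gen_base.
have lt_x : (index x (enum {ffun 'I_n -> A}) < g)%N.
  have card_power : #|{ffun 'I_n -> A}| = (#|A| ^ n)%N by rewrite card_ffun card_ord.
  by rewrite (leq_trans _ le_g) // -card_power cardE index_mem mem_enum.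
by exists (Ordinal lt_x); rewrite /= nth_index ?mem_enum.
Qed.

Lemma power_gen_by_widen n g g' :
  (g <= g')%N -> power_gen_by n g -> power_gen_by n g'.
Proof.
move=> le_g [gens gensP]; pose x0 : {ffun 'I_n -> A} := [ffun _ => a0].
exists (fun i : 'I_g' => if insub (val i) is Some j then gens j else x0) => x.
apply: generated_mono (gensP x) => _ [j <-]; exists (widen_ord le_g j).
by rewrite /= valK.
Qed.

Lemma power_gen_by_proj n m g :
  (m <= n)%N -> power_gen_by n g -> power_gen_by m g.
Proof.
move=> le_m [gens gensP].
pose proj (x : {ffun 'I_n -> A}) : {ffun 'I_m -> A} := [ffun i => x (widen_ord le_m i)].
exists (fun i => proj (gens i)) => z.
have proj_gen y : generated (fun x => exists i, gens i = x) y ->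
    generated (fun x => exists i, proj (gens i) = x) (proj y).
  elim=> [_ [i <-] | f xs _ IH]; first by apply: gen_base; exists i.
  suff -> : proj [ffun j => ops (xs^~ j)] = [ffun j => ops (fun i => proj (xs i) j)].
    exact: gen_op.
  apply/ffunP => j; rewrite !ffunE; congr (ops _).
  by apply: functional_extensionality => i; rewrite ffunE.
pose y : {ffun 'I_n -> A} := [ffun j => if insub (val j) is Some k then z k else a0].
suff -> : z = proj y by exact/proj_gen/gensP.
by apply/ffunP => k; rewrite !ffunE /= valK.
Qed.

Lemma d_A_spec n :
  power_gen_by n (d_A ops n) /\ forall g, power_gen_by n g -> (d_A ops n <= g)%N.
Proof.
apply: (epsilon_spec (inhabits 0%N)
  (fun g => power_gen_by n g /\ forall g', power_gen_by n g' -> (g <= g')%N)).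
apply: exists_least; exists (#|A| ^ n)%N; exact: power_gen_by_all.
Qed.

Lemma h_A_spec g : (1 < #|A|)%N -> (0 < g)%N ->
  power_gen_by (h_A ops g) g /\ forall n, power_gen_by n g -> (n <= h_A ops g)%N.
Proof.
move=> A_gt1 g_gt0; apply: (epsilon_spec (inhabits 0%N)
  (fun n => power_gen_by n g /\ forall n', power_gen_by n' g -> (n' <= n)%N)).
apply: (@exists_greatest _ (#|A| ^ g)) => [|k]; last exact: power_gen_by_card.
by exists 0%N; apply: power_gen_by_all; rewrite expn0.
Qed.

Lemma d_A_leP n g : (d_A ops n <= g)%N <-> power_gen_by n g.
Proof.
have [d_gen d_min] := d_A_spec n.
by split=> [le_g | /d_min]; first exact: power_gen_by_widen le_g d_gen.
Qed.

Lemma h_A_geP n g : (1 < #|A|)%N -> (0 < g)%N ->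
  (n <= h_A ops g)%N <-> power_gen_by n g.
Proof.
move=> A_gt1 g_gt0; have [h_gen h_max] := h_A_spec A_gt1 g_gt0.
by split=> [le_n | /h_max]; first exact: power_gen_by_proj le_n h_gen.
Qed.

Lemma d_A_le_h_A n g : (1 < #|A|)%N -> (0 < g)%N ->
  (d_A ops n <= g)%N <-> (n <= h_A ops g)%N.
Proof. by move=> A_gt1 g_gt0; rewrite d_A_leP h_A_geP. Qed.

End PowerGeneration.

Local Open Scope R_scope.

Lemma INR_leq (m n : nat) : (m <= n)%N -> INR m <= INR n.
Proof. by move/leP; apply: le_INR. Qed.

Lemma leq_INR (m n : nat) : INR m <= INR n -> (m <= n)%N.
Proof. by move/INR_le/leP. Qed.

Lemma ltn_INR (m n : nat) : INR m < INR n -> (m < n)%N.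
Proof. by move/INR_lt/ltP. Qed.

Lemma INR_gt0 (n : nat) : (0 < n)%N -> 0 < INR n.
Proof. by move/ltP; apply: lt_0_INR. Qed.

Lemma INR_expn (m k : nat) : INR (m ^ k)%N = INR m ^ k.
Proof. by elim: k => [|k IH] //=; rewrite expnS mult_INR IH. Qed.

Lemma ln_le_ln x y : 0 < x -> x <= y -> ln x <= ln y.
Proof. by move=> x_gt0 [lt_xy | <-]; [left; apply: ln_increasing | right]. Qed.

Lemma Rinv_mult_le c a b : 0 < c -> a <= c * b -> / c * a <= b.
Proof.
move=> c_gt0 le_ab; apply: (Rle_trans _ (/ c * (c * b))).
  by apply: Rmult_le_compat_l => //; left; apply: Rinv_0_lt_compat.
by right; field; lra.
Qed.

Lemma Rle_inv_mult c a b : 0 < c -> c * a <= b -> a <= / c * b.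
Proof.
move=> c_gt0 le_ab; apply: (Rle_trans _ (/ c * (c * a))); first by right; field; lra.
by apply: Rmult_le_compat_l => //; left; apply: Rinv_0_lt_compat.
Qed.

Lemma ln_le_inv x y : 0 < x -> 0 < y -> ln x <= ln y -> x <= y.
Proof.
move=> x_gt0 y_gt0 le_ln; apply: Rnot_lt_le => /(ln_increasing _ _ y_gt0).
by move: le_ln; lra.
Qed.

Lemma ln_INR_ge0 (n : nat) : (0 < n)%N -> 0 <= ln (INR n).
Proof. by move/INR_leq=> /= n_ge1; rewrite -ln_1; apply: ln_le_ln; first lra. Qed.

Lemma ln2_gt0 : 0 < ln 2.
Proof. have := ln_lt_2; lra. Qed.

Lemma ln2_lt1 : ln 2 < 1.
Proof.
rewrite -[X in _ < X]ln_exp; apply: ln_increasing; first lra.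
by have := exp_ineq1 1; lra.
Qed.

Lemma exists_floor y : 0 <= y -> exists k : nat, INR k <= y < INR k + 1.
Proof.
move=> y_ge0; have [K y_lt_K] : exists K : nat, y < INR K.
  by have [K] := INR_archimed 1 y ltac:(lra); exists K; lra.
have [[|k] [y_lt_k k_min]] := @exists_least (fun k : nat => y < INR k) (ex_intro _ K y_lt_K).
  by move: y_lt_k => /=; lra.
exists k; rewrite S_INR in y_lt_k; split=> //.
by apply: Rnot_lt_le => /k_min; rewrite ltnn.
Qed.

Lemma bigO_intro (f g : nat -> R) M N : 0 < M -> 0 < N ->
  (forall x, N < INR x -> 0 <= f x <= M * g x) -> bigO f g.
Proof.
move=> M_gt0 N_gt0 fg; exists M, N; do 2!split=> //.
move=> x /fg [f_ge0 le_fg]; rewrite Rabs_pos_eq //.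
apply: Rle_trans le_fg _; apply: Rmult_le_compat_l; [lra | exact: Rle_abs].
Qed.

Lemma bigOmega_intro (f g : nat -> R) M N : 0 < M -> 0 < N ->
  (forall x, N < INR x -> 0 <= g x /\ M * g x <= f x) -> bigOmega f g.
Proof.
move=> M_gt0 N_gt0 fg; exists M, N; do 2!split=> //.
move=> x /fg [g_ge0 le_fg]; rewrite (Rabs_pos_eq (g x)) //.
by apply: Rle_ge; apply: Rle_trans le_fg (Rle_abs _).
Qed.

Lemma lt0n_of_pos_lt_INR (N : R) (x : nat) : 0 < N -> N < INR x -> (0 < x)%N.
Proof. by move=> N_gt0 N_lt_x; apply: ltn_INR => /=; lra. Qed.

Definition nonneg_on_pos (g : nat -> R) := forall x, (0 < x)%N -> 0 <= g x.

Lemma idR_nonneg : nonneg_on_pos idR.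
Proof. by move=> x _; apply: pos_INR. Qed.

Lemma logR_nonneg : nonneg_on_pos logR.
Proof. exact: ln_INR_ge0. Qed.

Lemma bigO_natE (f : nat -> nat) (g : nat -> R) : nonneg_on_pos g ->
  bigO (natR f) g -> exists M N, 0 < M /\ 0 < N /\
    forall x, N < INR x -> INR (f x) <= M * g x.
Proof.
move=> g_ge0 [M [N [M_gt0 [N_gt0 fg]]]]; exists M, N; do 2!split=> //.
move=> x N_lt_x; have := fg x N_lt_x.
have g_x := g_ge0 x (lt0n_of_pos_lt_INR N_gt0 N_lt_x).
have f_x := pos_INR (f x).
by rewrite /natR !Rabs_pos_eq.
Qed.

Lemma bigOmega_natE (f : nat -> nat) (g : nat -> R) : nonneg_on_pos g ->
  bigOmega (natR f) g -> exists M N, 0 < M /\ 0 < N /\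
    forall x, N < INR x -> M * g x <= INR (f x).
Proof.
move=> g_ge0 [M [N [M_gt0 [N_gt0 fg]]]]; exists M, N; do 2!split=> //.
move=> x N_lt_x; have := fg x N_lt_x.
have g_x := g_ge0 x (lt0n_of_pos_lt_INR N_gt0 N_lt_x).
have f_x := pos_INR (f x).
by rewrite /natR !Rabs_pos_eq // => /Rge_le.
Qed.

Lemma Rpower2_log2 (n : nat) : (0 < n)%N -> Rpower 2 (ln (INR n) / ln 2) = INR n.
Proof.
move=> n_gt0; rewrite /Rpower.
have -> : ln (INR n) / ln 2 * ln 2 = ln (INR n) by field; have := ln2_gt0; lra.
exact/exp_ln/INR_gt0.
Qed.

Lemma exp_bigO_of_ln (f : nat -> nat) N : 0 < N -> (forall x, N < INR x -> (0 < f x)%N) ->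
  bigO (fun x => ln (INR (f x))) idR -> exp_bigO (natR f).
Proof.
move=> N_gt0 f_gt0 [M [N' [M_gt0 [N'_gt0 lnf]]]].
exists (fun x => ln (INR (f x)) / ln 2); split; last first.
  by exists N; split=> // x /f_gt0 /Rpower2_log2.
have l2 := ln2_gt0; exists (M / ln 2), N'.
split; first exact: Rdiv_lt_0_compat; split=> //.
move=> x /lnf lnf_x; rewrite /Rdiv Rabs_mult Rabs_inv (Rabs_pos_eq (ln 2)); last lra.
have := Rinv_0_lt_compat _ l2; nra.
Qed.

Lemma exp_bigOmega_of_ln (f : nat -> nat) N : 0 < N -> (forall x, N < INR x -> (0 < f x)%N) ->
  bigOmega (fun x => ln (INR (f x))) idR -> exp_bigOmega (natR f).
Proof.
move=> N_gt0 f_gt0 [M [N' [M_gt0 [N'_gt0 lnf]]]].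
exists (fun x => ln (INR (f x)) / ln 2); split; last first.
  by exists N; split=> // x /f_gt0 /Rpower2_log2.
have l2 := ln2_gt0; exists (M / ln 2), N'.
split; first exact: Rdiv_lt_0_compat; split=> //.
move=> x /lnf /Rge_le lnf_x; apply: Rle_ge.
rewrite /Rdiv Rabs_mult Rabs_inv (Rabs_pos_eq (ln 2)); last lra.
have := Rinv_0_lt_compat _ l2; nra.
Qed.

Lemma Rpower2_nat_ge0 (m : nat) y : INR m = Rpower 2 y -> 0 <= y.
Proof.
move=> m_pow; apply: Rnot_lt_le => y_lt0; move: m_pow; rewrite /Rpower.
have pow_lt1 : exp (y * ln 2) < 1 by rewrite -exp_0; apply: exp_increasing; have := ln2_gt0; nra.
have := exp_pos (y * ln 2); case: m => [|m]; first by rewrite /=; lra.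
by rewrite S_INR; have := pos_INR m; lra.
Qed.

Lemma exp_bigOmega_natE (f : nat -> nat) : exp_bigOmega (natR f) ->
  exists c N, 0 < c /\ 0 < N /\
    forall x, N < INR x -> (0 < f x)%N /\ c * INR x <= ln (INR (f x)).
Proof.
move=> [G [[M [N [M_gt0 [N_gt0 MG]]]] [N' [N'_gt0 fG]]]].
have l2 := ln2_gt0; exists (M * ln 2), (N + N'); split; first nra; split; first lra.
move=> x x_large; have fG_x : INR (f x) = Rpower 2 (G x) by apply: fG; lra.
split; first by apply: ltn_INR; rewrite fG_x; apply: exp_pos.
have G_ge0 := Rpower2_nat_ge0 fG_x.
have /Rge_le : Rabs (G x) >= M * Rabs (idR x) by apply: MG; lra.
rewrite fG_x ln_Rpower /idR !Rabs_pos_eq ?pos_INR //; nra.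
Qed.

Section GaloisAsymptotics.
Variables (p : nat) (d h : nat -> nat).
Hypothesis p_gt1 : (1 < p)%N.
Hypothesis d_lb : forall n, (n <= p ^ d n)%N.
Hypothesis d_ub : forall n, (d n <= p ^ n)%N.
Hypothesis h_lb : forall g, (0 < g)%N -> (g < p ^ (h g).+1)%N.
Hypothesis h_ub : forall g, (0 < g)%N -> (h g <= p ^ g)%N.
Hypothesis d_le_h : forall n g, (0 < g)%N -> (d n <= g)%N <-> (n <= h g)%N.

Local Notation lp := (ln (INR p)).

Lemma INR_p_gt0 : 0 < INR p.
Proof. exact/INR_gt0/ltnW. Qed.

Lemma lp_gt0 : 0 < lp.
Proof.
rewrite -ln_1; apply: ln_increasing; first lra.
by have := INR_leq p_gt1; rewrite /=; lra.
Qed.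

Lemma ln_INR_pexp k : ln (INR (p ^ k)) = INR k * lp.
Proof. by rewrite INR_expn ln_pow //; exact: INR_p_gt0. Qed.

Lemma d_gt0 n : (1 < n)%N -> (0 < d n)%N.
Proof.
move=> n_gt1; have := d_lb n.
by case: (d n) => // /(leq_trans n_gt1); rewrite expn0.
Qed.

Lemma h_gt0 g : (p <= g)%N -> (0 < h g)%N.
Proof.
move=> p_le_g; have := h_lb (leq_trans (ltnW p_gt1) p_le_g).
by case: (h g) => // ; rewrite expn1 => /leq_trans /(_ p_le_g); rewrite ltnn.
Qed.

Lemma ln_le_d n : (0 < n)%N -> ln (INR n) <= INR (d n) * lp.
Proof.
move=> n_gt0; rewrite -ln_INR_pexp; apply: ln_le_ln; first exact: INR_gt0.
exact/INR_leq/d_lb.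
Qed.

Lemma ln_d_le n : (1 < n)%N -> ln (INR (d n)) <= INR n * lp.
Proof.
move=> n_gt1; rewrite -ln_INR_pexp; apply: ln_le_ln; first exact/INR_gt0/d_gt0.
exact/INR_leq/d_ub.
Qed.

Lemma ln_lt_h g : (0 < g)%N -> ln (INR g) < (INR (h g) + 1) * lp.
Proof.
move=> g_gt0; rewrite -S_INR -ln_INR_pexp; apply: ln_increasing; first exact: INR_gt0.
by apply/lt_INR/ltP; exact: h_lb.
Qed.

Lemma ln_h_le g : (p <= g)%N -> ln (INR (h g)) <= INR g * lp.
Proof.
move=> p_le_g; rewrite -ln_INR_pexp; apply: ln_le_ln; first exact/INR_gt0/h_gt0.
exact/INR_leq/h_ub/(leq_trans (ltnW p_gt1)).
Qed.

Lemma d_bigOmega_log : bigOmega (natR d) logR.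
Proof.
apply: (@bigOmega_intro _ _ (/ lp) (/ 2)); [exact/Rinv_0_lt_compat/lp_gt0 | lra |].
move=> x x_large; have x_gt0 : (0 < x)%N by apply: lt0n_of_pos_lt_INR x_large; lra.
split; first exact: logR_nonneg.
by apply: Rinv_mult_le; [exact: lp_gt0 | rewrite Rmult_comm; exact: ln_le_d].
Qed.

Lemma h_bigOmega_log : bigOmega (natR h) logR.
Proof.
have lp0 := lp_gt0.
apply: (@bigOmega_intro _ _ (/ (2 * lp)) (INR p));
  [apply: Rinv_0_lt_compat; lra | exact: INR_p_gt0 |].
move=> x /ltn_INR/ltnW p_le_x; have x_gt0 := leq_trans (ltnW p_gt1) p_le_x.
split; first exact: logR_nonneg.
apply: Rinv_mult_le; first lra.
have := ln_lt_h x_gt0; have := INR_leq (h_gt0 p_le_x); rewrite /natR /logR /=; nra.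
Qed.

Lemma d_exp_bigO : exp_bigO (natR d).
Proof.
apply: (@exp_bigO_of_ln _ 1) => [| x /(@ltn_INR 1) /d_gt0 // |]; first lra.
apply: (@bigO_intro _ _ lp 1); [exact: lp_gt0 | lra |].
move=> x /(@ltn_INR 1) x_gt1; split; first exact/ln_INR_ge0/d_gt0.
by rewrite Rmult_comm; exact: ln_d_le.
Qed.

Lemma h_exp_bigO : exp_bigO (natR h).
Proof.
apply: (@exp_bigO_of_ln _ (INR p)) => [| x /ltn_INR /ltnW /h_gt0 // |]; first exact: INR_p_gt0.
apply: (@bigO_intro _ _ lp (INR p)); [exact: lp_gt0 | exact: INR_p_gt0 |].
move=> x /ltn_INR /ltnW p_le_x; split; first exact/ln_INR_ge0/h_gt0.
by rewrite Rmult_comm; exact: ln_h_le.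
Qed.

Lemma h_bounded (N : R) : exists B, 0 <= B /\
  forall g, (0 < g)%N -> INR g <= N -> INR (h g) <= B.
Proof.
have [K N_lt_K] : exists K : nat, N < INR K.
  by have [K] := INR_archimed 1 N ltac:(lra); exists K; lra.
exists (INR (p ^ K)); split=> [|g g_gt0 g_le_N]; first exact: pos_INR.
apply/INR_leq/(leq_trans (h_ub g_gt0))/leq_pexp2l; first exact: ltnW.
by apply/ltnW/ltn_INR; lra.
Qed.

Lemma h_bigOmega_id_of_d_bigO_id : bigO (natR d) idR -> bigOmega (natR h) idR.
Proof.
case/(bigO_natE idR_nonneg) => M [N [M_gt0 [N_gt0 d_le]]].
apply: (@bigOmega_intro _ _ (/ (2 * M)) (M * (N + 2))); [apply: Rinv_0_lt_compat | |]; try nra.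
move=> g g_large; split; first exact: pos_INR.
have g_gt0 : (0 < g)%N by apply: lt0n_of_pos_lt_INR g_large; nra.
pose t := INR g / M; have g_t : INR g = M * t by rewrite /t; field; lra.
have t_large : N + 2 < t by apply: (Rmult_lt_reg_l M); lra.
(* k = floor t has d k <= M k <= g, so k <= h g. *)
have [k [k_le_t t_lt_k1]] := exists_floor (ltac:(lra) : 0 <= t).
have dk_le_g : (d k <= g)%N.
  apply: leq_INR; apply: Rle_trans (d_le k _) _; first lra.
  by rewrite /idR g_t; apply: Rmult_le_compat_l; lra.
have := INR_leq (proj1 (d_le_h k g_gt0) dk_le_g).
rewrite /natR /idR g_t; have -> : / (2 * M) * (M * t) = t / 2 by field; lra.
nra.
Qed.

Lemma d_bigO_id_of_h_bigOmega_id : bigOmega (natR h) idR -> bigO (natR d) idR.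
Proof.
case/(bigOmega_natE idR_nonneg) => c [N [c_gt0 [N_gt0 h_ge]]].
apply: (@bigO_intro _ _ (2 / c) (c * (N + 1))); [apply: Rdiv_lt_0_compat; lra | nra |].
move=> n n_large; split; first exact: pos_INR.
pose t := INR n / c; have n_t : INR n = c * t by rewrite /t; field; lra.
have t_large : N + 1 < t by apply: (Rmult_lt_reg_l c); lra.
have [k [k_le_t t_lt_k1]] := exists_floor (ltac:(lra) : 0 <= t).
have n_le_h : (n <= h k.+1)%N.
  apply: leq_INR; apply: Rle_trans (h_ge k.+1 _); rewrite /idR S_INR; last lra.
  by rewrite n_t; apply: Rmult_le_compat_l; lra.
have := INR_leq (proj2 (d_le_h n (ltn0Sn k)) n_le_h).
rewrite /natR /idR n_t S_INR; have -> : 2 / c * (c * t) = 2 * t by field; lra.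
lra.
Qed.

Lemma h_bigO_id_of_d_bigOmega_id : bigOmega (natR d) idR -> bigO (natR h) idR.
Proof.
case/(bigOmega_natE idR_nonneg) => c [N [c_gt0 [N_gt0 d_ge]]].
have c_inv := Rinv_0_lt_compat c c_gt0.
apply: (@bigO_intro _ _ (/ c + 1) (N + 1)); [lra | lra |].
move=> g g_large; split; first exact: pos_INR.
have g_gt0 : (0 < g)%N by apply: lt0n_of_pos_lt_INR g_large; lra.
have /INR_leq dh_le_g : (d (h g) <= g)%N by apply/d_le_h.
rewrite /natR /idR; have := pos_INR g.
case: (Rle_or_lt (INR (h g)) N) => [|/d_ge c_h]; first nra.
have := Rle_inv_mult c_gt0 (Rle_trans _ _ _ c_h dh_le_g); rewrite /idR; nra.
Qed.

Lemma d_bigOmega_id_of_h_bigO_id : bigO (natR h) idR -> bigOmega (natR d) idR.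
Proof.
case/(bigO_natE idR_nonneg) => M [N [M_gt0 [N_gt0 h_le]]].
have [B [B_ge0 h_le_B]] := h_bounded N.
apply: (@bigOmega_intro _ _ (/ M) (B + 1)); [exact: Rinv_0_lt_compat | lra |].
move=> n n_large; split; first exact: pos_INR.
have d_gt0_n : (0 < d n)%N by apply/d_gt0/(@ltn_INR 1) => /=; lra.
have /INR_leq n_le_h : (n <= h (d n))%N by apply/d_le_h.
case: (Rle_or_lt (INR (d n)) N) => [/(h_le_B _ d_gt0_n) | /h_le h_d]; first lra.
by apply: Rinv_mult_le => //; apply: Rle_trans h_d.
Qed.

Lemma h_exp_bigOmega_of_d_bigO_log : bigO (natR d) logR -> exp_bigOmega (natR h).
Proof.
case/(bigO_natE logR_nonneg) => M [N [M_gt0 [N_gt0 d_le]]].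
apply: (@exp_bigOmega_of_ln _ (INR p)) => [| x /ltn_INR /ltnW /h_gt0 // |].
  exact: INR_p_gt0.
have l2 := ln2_gt0; have l21 := ln2_lt1.
apply: (@bigOmega_intro _ _ (/ (2 * M)) (M * (N + 3))); [apply: Rinv_0_lt_compat | |]; try nra.
move=> g g_large; split; first exact: pos_INR.
have g_gt0 : (0 < g)%N by apply: lt0n_of_pos_lt_INR g_large; nra.
pose t := INR g / M; have g_t : INR g = M * t by rewrite /t; field; lra.
have t_large : N + 3 < t by apply: (Rmult_lt_reg_l M); lra.
(* k = floor (exp t) has ln k <= t, so d k <= M ln k <= g and k <= h g. *)
have [k [k_le_et et_lt_k1]] := exists_floor (Rlt_le _ _ (exp_pos t)).
have exp_t_ge := exp_ineq1_le t.
have k_gt0 : (0 < k)%N by apply: ltn_INR => /=; lra.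
have ln_k_le_t : ln (INR k) <= t by rewrite -[X in _ <= X]ln_exp; apply/ln_le_ln/k_le_et/INR_gt0.
have t_le_ln_k : t <= ln 2 + ln (INR k).
  rewrite -ln_mult; [| lra | exact: INR_gt0].
  by rewrite -[X in X <= _]ln_exp; apply: ln_le_ln; [exact: exp_pos | lra].
have dk_le_g : (d k <= g)%N.
  apply: leq_INR; apply: Rle_trans (d_le k _) _; first lra.
  by rewrite /logR g_t; apply: Rmult_le_compat_l; lra.
have := ln_le_ln (INR_gt0 k_gt0) (INR_leq (proj1 (d_le_h k g_gt0) dk_le_g)).
rewrite /idR g_t; have -> : / (2 * M) * (M * t) = t / 2 by field; lra.
lra.
Qed.

Lemma d_bigO_log_of_h_exp_bigOmega : exp_bigOmega (natR h) -> bigO (natR d) logR.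
Proof.
case/exp_bigOmega_natE => c [N [c_gt0 [N_gt0 h_ge]]].
apply: (@bigO_intro _ _ (2 / c) (exp (c * (N + 1))));
  [apply: Rdiv_lt_0_compat; lra | exact: exp_pos |].
move=> n n_large; split; first exact: pos_INR.
have n_gt0 : (0 < n)%N := lt0n_of_pos_lt_INR (exp_pos _) n_large.
have ln_large : c * (N + 1) < ln (INR n).
  by rewrite -[X in X < _]ln_exp; apply: ln_increasing => //; exact: exp_pos.
pose t := ln (INR n) / c; have n_t : ln (INR n) = c * t by rewrite /t; field; lra.
have t_large : N + 1 < t by apply: (Rmult_lt_reg_l c); lra.
have [k [k_le_t t_lt_k1]] := exists_floor (ltac:(lra) : 0 <= t).
have [hk_gt0 hk_ge] : (0 < h k.+1)%N /\ c * INR k.+1 <= ln (INR (h k.+1)).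
  by apply: h_ge; rewrite S_INR; lra.
have n_le_h : (n <= h k.+1)%N.
  apply/leq_INR/ln_le_inv; [exact: INR_gt0 | exact: INR_gt0 |].
  apply: Rle_trans hk_ge; rewrite n_t S_INR; apply: Rmult_le_compat_l; lra.
have := INR_leq (proj2 (d_le_h n (ltn0Sn k)) n_le_h).
rewrite /natR /logR n_t S_INR; have -> : 2 / c * (c * t) = 2 * t by field; lra.
lra.
Qed.

Lemma h_bigO_log_of_d_exp_bigOmega : exp_bigOmega (natR d) -> bigO (natR h) logR.
Proof.
case/exp_bigOmega_natE => c [N [c_gt0 [N_gt0 d_ge]]].
have c_inv := Rinv_0_lt_compat c c_gt0.
apply: (@bigO_intro _ _ (/ c + 1) (exp N)); [lra | exact: exp_pos |].
move=> g g_large; split; first exact: pos_INR.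
have g_gt0 : (0 < g)%N := lt0n_of_pos_lt_INR (exp_pos _) g_large.
have ln_large : N < ln (INR g).
  by rewrite -[X in X < _]ln_exp; apply: ln_increasing => //; exact: exp_pos.
have /INR_leq dh_le_g : (d (h g) <= g)%N by apply/d_le_h.
rewrite /natR /logR.
case: (Rle_or_lt (INR (h g)) N) => [|/d_ge [dh_gt0 c_h]]; first nra.
have := ln_le_ln (INR_gt0 dh_gt0) dh_le_g => ln_dh_le.
have := Rle_inv_mult c_gt0 (Rle_trans _ _ _ c_h ln_dh_le); nra.
Qed.

Lemma d_exp_bigOmega_of_h_bigO_log : bigO (natR h) logR -> exp_bigOmega (natR d).
Proof.
case/(bigO_natE logR_nonneg) => M [N [M_gt0 [N_gt0 h_le]]].
have [B [B_ge0 h_le_B]] := h_bounded N.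
apply: (@exp_bigOmega_of_ln _ 1) => [| x /(@ltn_INR 1) /d_gt0 // |]; first lra.
apply: (@bigOmega_intro _ _ (/ M) (B + 1)); [exact: Rinv_0_lt_compat | lra |].
move=> n n_large; split; first exact: pos_INR.
have d_gt0_n : (0 < d n)%N by apply/d_gt0/(@ltn_INR 1) => /=; lra.
have /INR_leq n_le_h : (n <= h (d n))%N by apply/d_le_h.
case: (Rle_or_lt (INR (d n)) N) => [/(h_le_B _ d_gt0_n) | /h_le h_d]; first lra.
by apply: Rinv_mult_le => //; apply: Rle_trans h_d.
Qed.

Lemma galois_pair_asymptotics :
  (bigOmega (natR d) logR /\ exp_bigO (natR d) /\
   bigOmega (natR h) logR /\ exp_bigO (natR h)) /\
  (bigO (natR d) logR <-> exp_bigOmega (natR h)) /\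
  ((bigO (natR d) idR <-> bigOmega (natR h) idR) /\
   (bigOmega (natR d) idR <-> bigO (natR h) idR)) /\
  (exp_bigOmega (natR d) <-> bigO (natR h) logR).
Proof.
split.
  by do !split; [exact: d_bigOmega_log | exact: d_exp_bigO
                | exact: h_bigOmega_log | exact: h_exp_bigO].
split.
  by split; [exact: h_exp_bigOmega_of_d_bigO_log | exact: d_bigO_log_of_h_exp_bigOmega].
split.
  by do !split; [exact: h_bigOmega_id_of_d_bigO_id | exact: d_bigO_id_of_h_bigOmega_id
                | exact: h_bigO_id_of_d_bigOmega_id | exact: d_bigOmega_id_of_h_bigO_id].
by split; [exact: h_bigO_log_of_d_exp_bigOmega | exact: d_exp_bigOmega_of_h_bigO_log].
Qed.

End GaloisAsymptotics.

Close Scope R_scope.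

Theorem theorem2p2 (A : finType) (F : Type) (ar : F -> nat)
    (ops : forall f : F, ('I_(ar f) -> A) -> A) :
  (1 < #|A|)%N ->
  (forall n : nat, (0 < n)%N ->
     (up_log #|A| n <= d_A ops n <= #|A| ^ n)%N /\
     (trunc_log #|A| n <= h_A ops n <= #|A| ^ n)%N) /\
  (bigOmega (natR (d_A ops)) logR /\ exp_bigO (natR (d_A ops)) /\
   bigOmega (natR (h_A ops)) logR /\ exp_bigO (natR (h_A ops))) /\
  (bigO (natR (d_A ops)) logR <-> exp_bigOmega (natR (h_A ops))) /\
  ((bigO (natR (d_A ops)) idR <-> bigOmega (natR (h_A ops)) idR) /\
   (bigOmega (natR (d_A ops)) idR <-> bigO (natR (h_A ops)) idR)) /\
  (exp_bigOmega (natR (d_A ops)) <-> bigO (natR (h_A ops)) logR).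
Proof.
move=> A_gt1; have [a0 _] : exists a : A, True by case/card_gt1P: A_gt1 => a _; exists a.
have d_lb n : (n <= #|A| ^ d_A ops n)%N := power_gen_by_card A_gt1 (d_A_spec ops a0 n).1.
have d_ub n : (d_A ops n <= #|A| ^ n)%N by apply/(d_A_leP ops a0)/power_gen_by_all.
have h_ub g : (0 < g)%N -> (h_A ops g <= #|A| ^ g)%N.
  by move=> g_gt0; exact: power_gen_by_card A_gt1 (h_A_spec ops a0 A_gt1 g_gt0).1.
have trunc_log_le_h g : (0 < g)%N -> (trunc_log #|A| g <= h_A ops g)%N.
  by move=> g_gt0; apply/(h_A_geP ops a0 _ A_gt1 g_gt0)/power_gen_by_all/trunc_logP.
have h_lb g : (0 < g)%N -> (g < #|A| ^ (h_A ops g).+1)%N.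
  move=> g_gt0; apply: leq_trans (trunc_log_ltn g A_gt1) _.
  by apply: leq_pexp2l; [exact: ltnW | exact: trunc_log_le_h].
split=> [n n_gt0 | ]; first by rewrite up_log_min ?d_ub ?trunc_log_le_h ?h_ub.
exact: (galois_pair_asymptotics A_gt1 d_lb d_ub h_lb h_ub
  (fun n g => @d_A_le_h_A _ _ _ ops a0 n g A_gt1)).
Qed.
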